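(* Let $N,t,r,K$ be integers with $t,r\ge1$, $m=t+r<N$, $K\ge N$, and let $n_0=K-(N-t)+1$. For $s\ge0$ and $(x,y)\in(0,1]^2$ define $$f(x,y;s)=f_\beta(x;n_0,r,0)\,f_\beta(y;K-(N-t)+r+1,N-t-r,0)\,e^{-s xy}\sum_{k=0}^{n_0}\binom{n_0}{k}\frac{(r-1)!}{(r+k-1)!}[s\,y(1-x)]^k$$ (the joint pdf of the maximal invariant $(p_1,p_2)$ under $H_1$ when $\mathrm{SINR}=s$; the pdf under $H_0$ is $f(x,y;0)$). Then the locally most powerful invariant detector statistic $$t_{\mathrm{LMPID}}=\frac{\left.\frac{\partial f(p_1,p_2;s)}{\partial s}\right|_{s=0}}{f(p_1,p_2;0)}$$ equals $$t_{\mathrm{LMPID}}=\frac{K-(N-t)+1}{r}\,p_2(1-p_1)-p_1p_2,$$ so that the LMPID is the decision rule comparing this quantity with a threshold $\eta$ (deciding $H_1$ when it exceeds $\eta$).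
   Context: $f_\beta(x;n,m,0)=\frac{(n+m-1)!}{(n-1)!(m-1)!}x^{n-1}(1-x)^{m-1}$ is the complex central beta pdf. Here $p_1=1/\bigl(1+\frac{m_1}{1+m_2}\bigr)$, $p_2=1/(1+m_2)$ with $m_1=\mathbf{z}_{2.3}^\dagger\mathbf{S}_{2.3}^{-1}\mathbf{z}_{2.3}$, $m_2=\mathbf{z}_3^\dagger\mathbf{S}_{33}^{-1}\mathbf{z}_3$, where $\mathbf{z}\in\mathbb{C}^N$ is partitioned into blocks $\mathbf{z}_1,\mathbf{z}_2,\mathbf{z}_3$ of sizes $t,r,N-m$, $\mathbf{S}$ (a Hermitian positive definite sample matrix) is partitioned conformably, $\mathbf{z}_{2.3}=\mathbf{z}_2-\mathbf{S}_{23}\mathbf{S}_{33}^{-1}\mathbf{z}_3$ and $\mathbf{S}_{2.3}=\mathbf{S}_{22}-\mathbf{S}_{23}\mathbf{S}_{33}^{-1}\mathbf{S}_{32}$; all that matters for the claim is that $(p_1,p_2)\in(0,1]^2$. *)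

From HB Require Import structures.
From mathcomp Require Import all_boot all_order all_algebra.
From mathcomp Require Import all_classical all_reals all_analysis.
Set Implicit Arguments. Unset Strict Implicit. Unset Printing Implicit Defensive.
Import Order.TTheory GRing.Theory Num.Theory.
Local Open Scope ring_scope.

(* complex central beta pdf:
   f_beta(x;n,m,0) = (n+m-1)!/((n-1)!(m-1)!) x^(n-1) (1-x)^(m-1) *)
Definition fbeta {R : realType} (n m : nat) (x : R) : R :=
  ((n + m - 1)`!)%:R / (((n - 1)`!) * ((m - 1)`!))%:R
  * x ^+ (n - 1) * (1 - x) ^+ (m - 1).

Definition fjoint {R : realType} (N t r K : nat) (x y s : R) : R :=
  let n0 := (K - (N - t) + 1)%N in
  fbeta n0 r x * fbeta (K - (N - t) + r + 1) (N - t - r) y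
  * expR (- (s * x * y))
  * \sum_(k < n0.+1)
      ('C(n0, k))%:R * (((r - 1)`!)%:R / ((r + k - 1)`!)%:R)
      * (s * y * (1 - x)) ^+ k.

From HB Require Import structures.
From mathcomp Require Import all_boot all_order all_algebra.
From mathcomp Require Import all_classical all_reals all_analysis.
From mathcomp Require Import ring.
Import Order.TTheory GRing.Theory Num.Theory.
Local Open Scope ring_scope.

(* The [s]-dependence of [fjoint] is [expR (- s x y)] times a polynomial in
   [s] with constant term [1] and linear coefficient [n0 / r * y (1 - x)].
   Hence the derivative at [s = 0], divided by the value at [s = 0], is that
   linear coefficient minus [x y]: the beta-density prefactors cancel. *)

Lemma is_derive_expR_horner0 (R : realType) (a : R) (P : {poly R}) :
  is_derive (0 : R) (1 : R) (fun s : R => expR (- (s * a)) * P.[s])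
    (P`_1 - a * P`_0).
Proof.
pose q : {poly R} := (- a)%:P * 'X.
have -> : (fun s : R => expR (- (s * a)) * P.[s]) = (expR \o horner q) * horner P.
  by apply/funext => s; rewrite !fctE /q !hornerE mulNr [a * s]mulrC.
have q0 : q.[0] = 0 by rewrite !hornerE.
have dq0 : q^`().[0] = - a by rewrite derivM derivC derivX !hornerE.
apply: is_derive_eq.
rewrite /= q0 dq0 expR0 !horner_coef0 coef_deriv !scale1r.
by rewrite mulr1n mul1r scalerN mulrC.
Qed.

Section FjointSeries.
Context {R : realType}.

Definition fjoint_coef (n r k : nat) : R :=
  ('C(n, k))%:R * (((r - 1)`!)%:R / ((r + k - 1)`!)%:R).

Definition fjoint_poly (n r : nat) (b : R) : {poly R} :=
  \poly_(k < n.+1) (fjoint_coef n r k * b ^+ k).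

Lemma fjoint_coef0 (n r : nat) : fjoint_coef n r 0 = 1.
Proof.
by rewrite /fjoint_coef bin0 addn0 mul1r divff // pnatr_eq0 -lt0n fact_gt0.
Qed.

Lemma fjoint_coef1 (n r : nat) : (0 < r)%N -> fjoint_coef n r 1 = n%:R / r%:R.
Proof.
case: r => // r _.
rewrite /fjoint_coef bin1 addn1 !subn1 /= factS natrM.
field; by rewrite -mulrS !pnatr_eq0 -[(r`! != 0)%N]lt0n fact_gt0.
Qed.

Lemma fjoint_poly_coef0 (n r : nat) (b : R) : (fjoint_poly n r b)`_0 = 1.
Proof. by rewrite coef_poly /= fjoint_coef0 mulr1. Qed.

Lemma fjoint_poly_coef1 (n r : nat) (b : R) : (0 < n)%N -> (0 < r)%N ->
  (fjoint_poly n r b)`_1 = n%:R / r%:R * b.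
Proof. by move=> n_gt0 r_gt0; rewrite coef_poly ltnS n_gt0 fjoint_coef1. Qed.

End FjointSeries.

Lemma fjointE (R : realType) (N t r K : nat) (x y s : R) :
  fjoint N t r K x y s =
  fbeta (K - (N - t) + 1)%N r x * fbeta (K - (N - t) + r + 1)%N (N - t - r)%N y
  * (expR (- (s * (x * y)))
     * (fjoint_poly (K - (N - t) + 1)%N r (y * (1 - x))).[s]).
Proof.
rewrite /fjoint /fjoint_poly horner_poly mulrA.
congr (_ * _ * _); first by rewrite mulrA.
by apply: eq_bigr => k _; rewrite /fjoint_coef !exprMn; ring.
Qed.

Theorem proposition3 (R : realType) (N t r K : nat)
  (ht : (1 <= t)%N) (hr : (1 <= r)%N) (hm : (t + r < N)%N) (hK : (N <= K)%N)
  (x y : R) (hx : 0 < x <= 1) (hy : 0 < y <= 1)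
  (hf0 : fjoint N t r K x y 0 != 0) :
  derivable (fun s : R => fjoint N t r K x y s) 0 1 /\
  derive1 (fun s : R => fjoint N t r K x y s) 0 / fjoint N t r K x y 0
  = (K - (N - t) + 1)%N%:R / r%:R * y * (1 - x) - x * y.
Proof.
set n0 := (K - (N - t) + 1)%N.
set C := fbeta n0 r x * fbeta (K - (N - t) + r + 1) (N - t - r) y.
set P := fjoint_poly n0 r (y * (1 - x)).
have P0 : P`_0 = 1 := fjoint_poly_coef0 _ _ _.
have P1 : P`_1 = n0%:R / r%:R * (y * (1 - x)).
  by apply: fjoint_poly_coef1; rewrite // /n0 addn1.
have fE : (fun s : R => fjoint N t r K x y s)
          = cst C \* (fun s => expR (- (s * (x * y))) * P.[s]).
  by apply/funext => s; rewrite fjointE.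
have f0 : fjoint N t r K x y 0 = C.
  by rewrite fjointE -/n0 -/C -/P mul0r oppr0 expR0 horner_coef0 P0 !mulr1.
have df : is_derive (0 : R) (1 : R) (fun s : R => fjoint N t r K x y s)
            (C *: (P`_1 - x * y * P`_0)).
  by rewrite fE; apply: is_deriveZ; apply: is_derive_expR_horner0.
split; first by case: df.
rewrite derive1E derive_val f0 P0 P1 mulr1 mulrA.
have C_neq0 : C != 0 by rewrite -f0.
by rewrite /GRing.scale /= mulrAC divff // mul1r.
Qed.
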